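(* Let $r\geq 1$ be an integer. For $n\geq 0$ write $\prod_{j=0}^{n-1}\left(1+x^{2^j}\right)^3=\sum_{k\geq 0}c_k(n)x^k$ and let $u(n)=\sum_{k\geq 0}c_k(n)^r$. Then there exist rational constants $c_0,\dots,c_r$ (depending on $r$) such that $$u(n)=\sum_{i=0}^{r}c_i\,2^{(2i+1)n}\quad\text{for all } n\geq 0.$$ *)

From mathcomp Require Import all_boot all_order all_algebra.
Set Implicit Arguments. Unset Strict Implicit. Unset Printing Implicit Defensive.
Import Order.TTheory GRing.Theory Num.Theory.
Local Open Scope ring_scope.

Definition Ppoly (n : nat) : {poly int} :=
  \prod_(j < n) (1 + 'X^(2 ^ j)) ^+ 3.

Definition cc (n k : nat) : int := (Ppoly n)`_k.

(* u(n) = sum_{k>=0} c_k(n)^r ; coefficients vanish for k >= size (Ppoly n),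
   and r >= 1 so those terms are 0. *)
Definition u (r n : nat) : int := \sum_(k < size (Ppoly n)) (cc n k) ^+ r.

From mathcomp Require Import all_boot all_order all_algebra.
From mathcomp Require Import ring lra zify.

(* With N = 2^n, (1 - x)^3 P_n = (1 - x^N)^3, so on each of the blocks
   k = j, N + j, 2N + j (j < N) the coefficient c_k(n) is a fixed quadratic
   polynomial in (N, j).  Hence u(n) = sum_(j < N) F(N, j) for a bivariate
   polynomial F of total degree 2r, and summing in j with a discrete
   antiderivative gives u(n) = Q(N) with deg Q <= 2r + 1.  The substitution
   (x, y) |-> (-x, -y - 1) maps F(x, y) to F(x, y - 2), and the quadratic
   (t + 1)(t + 2) vanishes at -1 and -2; together these give Q(-N) = -Q(N)
   for all N, so Q is odd and Q(2^n) = sum_i q_(2i+1) 2^((2i+1)n). *)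

Set Implicit Arguments. Unset Strict Implicit. Unset Printing Implicit Defensive.
Import Order.TTheory GRing.Theory Num.Theory.
Local Open Scope ring_scope.

Section Antidifference.
Variable R : numFieldType.

Definition ffact_poly (k : nat) : {poly R} := \prod_(i < k) ('X - i%:R%:P).

Lemma size_ffact_poly k : size (ffact_poly k) = k.+1.
Proof. by rewrite size_prod_XsubC [index_enum _]unlock -enumT size_enum_ord. Qed.

Lemma lead_coef_ffact_poly k : lead_coef (ffact_poly k) = 1.
Proof. exact: lead_coef_prod_XsubC. Qed.

Lemma horner_ffact_polyS0 k : (ffact_poly k.+1).[0] = 0.
Proof. by rewrite horner_prod big_ord_recl hornerXsubC subrr mul0r. Qed.

Lemma ffact_polyS_diff k x :
  (ffact_poly k.+1).[x + 1] - (ffact_poly k.+1).[x] = k.+1%:R * (ffact_poly k).[x].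
Proof.
rewrite !horner_prod big_ord_recl big_ord_recr /=.
have -> : \prod_(i < k) ('X - (bump 0 i)%:R%:P).[x + 1]
          = \prod_(i < k) ('X - i%:R%:P).[x].
  by apply: eq_bigr => i _; rewrite !hornerXsubC -natr1; ring.
rewrite !hornerXsubC -natr1; ring.
Qed.

(* Integrates [q] termwise in the falling factorial basis, peeling off its
   top coefficient at each step. *)
Fixpoint antidiff_rec (n : nat) (q : {poly R}) : {poly R} :=
  if n is m.+1 then
    antidiff_rec m (q - q`_m *: ffact_poly m) + (q`_m / m.+1%:R) *: ffact_poly m.+1
  else 0.

Lemma antidiff_recP n (q : {poly R}) : (size q <= n)%N ->
  [/\ (antidiff_rec n q).[0] = 0,
      forall x, (antidiff_rec n q).[x + 1] - (antidiff_rec n q).[x] = q.[x]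
    & (size (antidiff_rec n q) <= n.+1)%N].
Proof.
elim: n q => [|n IH] q /=.
  rewrite size_poly_leq0 => /eqP ->.
  by rewrite size_poly0 horner0; split=> // x; rewrite !horner0 subrr.
move=> size_q; set c := (q`_n)%R.
have size_q' : (size (q - c *: ffact_poly n)%R <= n)%N.
  apply/leq_sizeP => j; rewrite leq_eqVlt => /orP [/eqP <-|lt_nj].
    have lead_n : (ffact_poly n)`_n = 1.
      by rewrite -(lead_coef_ffact_poly n) /lead_coef size_ffact_poly.
    by rewrite coefB coefZ lead_n mulr1 subrr.
  rewrite coefB coefZ !nth_default ?mulr0 ?subrr ?size_ffact_poly //.
  exact: leq_trans size_q lt_nj.
have [S0 SD size_S] := IH _ size_q'.
have nz_n1 : n.+1%:R != 0 :> R by rewrite pnatr_eq0.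
split.
- by rewrite hornerD hornerZ S0 horner_ffact_polyS0 mulr0 addr0.
- move=> x; rewrite !hornerD !hornerZ opprD addrACA -mulrBr ffact_polyS_diff SD.
  by rewrite mulrA divfK // hornerD hornerN hornerZ subrK.
- rewrite (leq_trans (size_polyD _ _)) // geq_max (leq_trans size_S) //=.
  by rewrite (leq_trans (size_scale_leq _ _)) // size_ffact_poly.
Qed.

Definition antidiff (p : {poly R}) : {poly R} := antidiff_rec (size p) p.

Lemma antidiff0 p : (antidiff p).[0] = 0.
Proof. by case: (antidiff_recP (leqnn (size p))). Qed.

Lemma antidiffE p x : (antidiff p).[x + 1] - (antidiff p).[x] = p.[x].
Proof. by case: (antidiff_recP (leqnn (size p))). Qed.

Lemma size_antidiff p : (size (antidiff p) <= (size p).+1)%N.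
Proof. by case: (antidiff_recP (leqnn (size p))). Qed.

Lemma horner_antidiff_nat p (N : nat) :
  (antidiff p).[N%:R] = \sum_(j < N) p.[j%:R].
Proof.
elim: N => [|N IH]; first by rewrite big_ord0 antidiff0.
by rewrite big_ord_recr /= -IH -(antidiffE p N%:R) -natr1; ring.
Qed.

Lemma horner_antidiff_Nnat p (N : nat) :
  (antidiff p).[- N%:R] = - \sum_(j < N) p.[- j.+1%:R].
Proof.
elim: N => [|N IH]; first by rewrite big_ord0 oppr0 antidiff0.
rewrite big_ord_recr /= opprD -IH -(antidiffE p (- N.+1%:R)).
by rewrite -natr1 opprD addrNK; ring.
Qed.

End Antidifference.

Section TotalDegree.
Variable R : nzRingType.
Implicit Types P Q : {poly {poly R}}.

(* [P] is read as a polynomial in x with coefficients in R[y] ('Y = 'X%:P);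
   [tdeg_leq d P] says that its total degree is at most [d]. *)
Definition tdeg_leq (d : nat) P := forall a : nat, (size (P`_a)%R <= d.+1 - a)%N.

Lemma size_tdeg_leq d P : tdeg_leq d P -> (size P <= d.+1)%N.
Proof.
move=> dP; apply/leq_sizeP => a le_da; apply/eqP.
by rewrite -size_poly_leq0 (leq_trans (dP a)) // leqn0 subn_eq0.
Qed.

Lemma tdeg_leqW d e P : (d <= e)%N -> tdeg_leq d P -> tdeg_leq e P.
Proof. by move=> le_de dP a; rewrite (leq_trans (dP a)) // leq_sub2r. Qed.

Lemma tdeg_leqD d P Q : tdeg_leq d P -> tdeg_leq d Q -> tdeg_leq d (P + Q).
Proof.
by move=> dP dQ a; rewrite coefD (leq_trans (size_polyD _ _)) // geq_max dP dQ.
Qed.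

Lemma tdeg_leqN d P : tdeg_leq d P -> tdeg_leq d (- P).
Proof. by move=> dP a; rewrite coefN size_polyN. Qed.

Lemma tdeg_leqM d e P Q : tdeg_leq d P -> tdeg_leq e Q -> tdeg_leq (d + e) (P * Q).
Proof.
move=> dP eQ a; rewrite coefM (leq_trans (size_sum _ _ _)) //.
apply/bigmax_leqP => b _.
have [->|nzP] := eqVneq P`_b 0; first by rewrite mul0r size_poly0.
have [->|nzQ] := eqVneq Q`_(a - b) 0; first by rewrite mulr0 size_poly0.
rewrite (leq_trans (size_polyMleq _ _)) //.
have := dP b; have := eQ (a - b)%N; have := ltn_ord b.
rewrite -!size_poly_gt0 in nzP nzQ; lia.
Qed.

Lemma tdeg_leqX d P n : tdeg_leq d P -> tdeg_leq (d * n) (P ^+ n).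
Proof.
move=> dP; elim: n => [|n IH]; last by rewrite exprS mulnS; apply: tdeg_leqM.
by move=> [|a]; rewrite expr0 coef1 ?size_poly1 ?size_poly0.
Qed.

Lemma tdeg_leq_nat n : tdeg_leq 0 n%:R.
Proof.
by move=> [|a]; rewrite -!polyC_natr coefC ?size_polyC_leq1 ?size_poly0.
Qed.

Lemma tdeg_leq_X : tdeg_leq 1 'X.
Proof. by move=> [|[|a]]; rewrite coefX ?size_poly1 ?size_poly0. Qed.

Lemma tdeg_leq_Y : tdeg_leq 1 'Y.
Proof. by move=> [|a]; rewrite coefC ?size_polyX ?size_poly0. Qed.

End TotalDegree.

Section SumBelow.
Variable R : numFieldType.
Implicit Type P : {poly {poly R}}.

Lemma horner2_coef P x y : P.[x, y] = \sum_(a < size P) (P`_a).[y] * x ^+ a.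
Proof.
rewrite [P in P.[_]]horner_coef horner_sum; apply: eq_bigr => a _.
by rewrite hornerM -rmorphXn hornerC.
Qed.

Definition sum_below P : {poly R} := \sum_(a < size P) 'X^a * antidiff P`_a.

Lemma horner_sum_below P x :
  (sum_below P).[x] = \sum_(a < size P) x ^+ a * (antidiff P`_a).[x].
Proof.
by rewrite horner_sum; apply: eq_bigr => a _; rewrite hornerM hornerXn.
Qed.

Lemma horner_sum_below_nat P (N : nat) :
  (sum_below P).[N%:R] = \sum_(j < N) P.[N%:R, j%:R].
Proof.
rewrite horner_sum_below.
under eq_bigr do rewrite horner_antidiff_nat mulr_sumr.
rewrite exchange_big; apply: eq_bigr => j _.
by rewrite horner2_coef; apply: eq_bigr => a _; rewrite mulrC.
Qed.

Lemma horner_sum_below_Nnat P (N : nat) :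
  (sum_below P).[- N%:R] = - \sum_(j < N) P.[- N%:R, - j.+1%:R].
Proof.
rewrite horner_sum_below.
under eq_bigr do rewrite horner_antidiff_Nnat mulrN mulr_sumr.
rewrite sumrN exchange_big; congr (- _); apply: eq_bigr => j _.
by rewrite horner2_coef; apply: eq_bigr => a _; rewrite mulrC.
Qed.

Lemma size_sum_below d P : tdeg_leq d P -> (size (sum_below P) <= d.+2)%N.
Proof.
move=> dP; rewrite (leq_trans (size_sum _ _ _)) //; apply/bigmax_leqP => a _.
have le_ad : (a <= d.+1)%N := leq_trans (ltnW (ltn_ord a)) (size_tdeg_leq dP).
rewrite (leq_trans (size_polyMleq _ _)) // size_polyXn addSn /=.
rewrite -[d.+1](subnKC le_ad) -addnS leq_add2l.
by rewrite (leq_trans (size_antidiff _)) // ltnS dP.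
Qed.

End SumBelow.

Lemma horner_odd_on_nat (R : numFieldType) (p : {poly R}) :
    (forall N : nat, p.[- N%:R] = - p.[N%:R]) ->
  forall x, p.[x] = (odd_poly p).[x ^+ 2] * x.
Proof.
move=> p_odd.
have p_split x : p.[x] = (even_poly p).[x ^+ 2] + (odd_poly p).[x ^+ 2] * x.
  by rewrite -[p in LHS]poly_even_odd hornerD hornerM hornerX !horner_comp hornerXn.
suff e0 : even_poly p = 0 by move=> x; rewrite p_split e0 horner0 add0r.
set e := even_poly p.
apply: (@roots_geq_poly_eq0 _ e [seq i%:R ^+ 2 | i <- iota 0 (size e)]).
- apply/allP => _ /mapP [i _ ->]; rewrite /root.
  have := p_odd i; rewrite !p_split sqrrN mulrN opprD => /addIr /eqP.
  by rewrite eq_sym eqNr.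
- have sqr_inj : injective (fun i : nat => i%:R ^+ 2 : R).
    by move=> i j /eqP; rewrite -!natrX eqr_nat => /eqP /sqrn_inj.
  by rewrite (map_inj_uniq sqr_inj) iota_uniq.
- by rewrite size_map size_iota.
Qed.

(* [tri m / 2] is the coefficient of [x^m] in [(1 - x)^-3]. *)
Definition tri (R : nzRingType) (t : R) : R := (t + 1) * (t + 2).

(* For [x = N] and [y = j < N], the three terms are the r-th powers of twice
   the coefficients of x^j, x^(N+j) and x^(2N+j) in [geom3_poly N]. *)
Definition block_pow (R : comNzRingType) (r : nat) (x y : R) : R :=
  tri y ^+ r + (tri (x + y) - 3 * tri y) ^+ r
  + (tri (x + x + y) - 3 * tri (x + y) + 3 * tri y) ^+ r.

Lemma rmorph_block_pow (R S : comNzRingType) (f : {rmorphism R -> S}) r x y :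
  f (block_pow r x y) = block_pow r (f x) (f y).
Proof.
by rewrite /block_pow /tri
  !(rmorph_nat, rmorphN, rmorphD, rmorphM, rmorphXn, rmorph1).
Qed.

Section BlockPow.
Variables (R : comNzRingType) (r : nat).
Implicit Types x y : R.

Lemma block_pow_reflect x y : block_pow r (- x) (- y - 1) = block_pow r x (y - 2).
Proof. by rewrite /block_pow /tri; congr (_ ^+ r + _ ^+ r + _ ^+ r); ring. Qed.

Lemma block_pow_shift x y : tri y = 0 -> block_pow r x (x + y) = block_pow r x y.
Proof.
move=> tri_y; rewrite /block_pow tri_y mulr0 subr0 addr0 !addrA.
have -> : tri (x + x + x + y) - 3 * tri (x + x + y) + 3 * tri (x + y) = tri y.
  by rewrite /tri; ring.
by rewrite tri_y [LHS]addrC !addrA.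
Qed.

Lemma sum_shift2 (g : R -> R) (N : nat) :
  \sum_(j < N) g (j%:R - 2) + g (N%:R - 2) + g (N%:R - 1)
  = g (-2) + g (-1) + \sum_(j < N) g j%:R.
Proof.
have e : N.+1%:R - 2 = N%:R - 1 :> R by rewrite -natr1; ring.
transitivity (\sum_(j < N.+2) g (j%:R - 2)); first by rewrite !big_ord_recr /= e.
rewrite !big_ord_recl /= /bump /= sub0r addrA; congr (_ + g _ + _); first by ring.
by apply: eq_bigr => j _; rewrite !add1n -addn2 natrD addrK.
Qed.

Lemma sum_block_pow_reflect (N : nat) :
  \sum_(j < N) block_pow r (- N%:R : R) (- j.+1%:R)
  = \sum_(j < N) block_pow r (N%:R : R) j%:R.
Proof.
under eq_bigr do rewrite -natr1 opprD block_pow_reflect.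
have tri_N2 : tri (-2 : R) = 0 by rewrite /tri; ring.
have tri_N1 : tri (-1 : R) = 0 by rewrite /tri; ring.
have := sum_shift2 (block_pow r N%:R) N.
rewrite !block_pow_shift // -addrA [RHS]addrC.
exact: addIr.
Qed.

End BlockPow.

Definition block_poly (R : comNzRingType) (r : nat) : {poly {poly R}} :=
  block_pow r 'X 'Y.

Lemma horner2_block_poly (R : comNzRingType) r x y :
  (block_poly R r).[x, y] = block_pow r x y.
Proof.
rewrite /block_poly -!horner_evalE !rmorph_block_pow /= !horner_evalE.
by rewrite !hornerE.
Qed.

Lemma tdeg_leq_tri (R : comNzRingType) (t : {poly {poly R}}) :
  tdeg_leq 1 t -> tdeg_leq 2 (tri t).
Proof.
move=> t1; apply: (tdeg_leqM (d := 1)); apply: tdeg_leqD => //.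
  exact: (tdeg_leqW (leq0n 1) (tdeg_leq_nat _ 1)).
exact: (tdeg_leqW (leq0n 1) (tdeg_leq_nat _ 2)).
Qed.

Lemma tdeg_block_poly (R : comNzRingType) r : tdeg_leq (2 * r) (block_poly R r).
Proof.
have tri_y := tdeg_leq_tri (tdeg_leq_Y _).
have tri_xy := tdeg_leq_tri (tdeg_leqD (tdeg_leq_X _) (tdeg_leq_Y _)).
have tri_xxy := tdeg_leq_tri
  (tdeg_leqD (tdeg_leqD (tdeg_leq_X _) (tdeg_leq_X _)) (tdeg_leq_Y _)).
have times3 P : tdeg_leq 2 P -> tdeg_leq 2 (3 * P) := tdeg_leqM (tdeg_leq_nat _ 3).
rewrite /block_poly /block_pow.
by do 2 ?apply: tdeg_leqD; apply: tdeg_leqX;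
  do ?[apply: tdeg_leqD | apply: tdeg_leqN | apply: times3 | assumption].
Qed.

Definition diff3 (R : nzRingType) (f : int -> R) (k : int) : R :=
  f k - 3 * f (k - 1) + 3 * f (k - 2) - f (k - 3).

Lemma coef_1subX3M (R : comNzRingType) (p : {poly R}) (f : int -> R) :
    (forall k : nat, p`_k = f k) -> (forall m : int, m < 0 -> f m = 0) ->
  forall k : nat, ((1 - 'X) ^+ 3 * p)`_k = diff3 f k.
Proof.
move=> pf f_neg k.
have -> : (1 - 'X) ^+ 3 * p = p - ('X * p) *+ 3 + ('X ^+ 2 * p) *+ 3 - 'X ^+ 3 * p.
  by ring.
have fE (m : int) : f m = if m < 0 then 0 else p`_`|m|.
  by case: ltrP => [/f_neg //|m_ge0]; rewrite pf gez0_abs.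
rewrite !coefD !coefN !coefMn coefXM !coefXnM /diff3 !fE.
by case: k => [|[|[|k]]] /=; rewrite ?subSS ?subn0; ring.
Qed.

Definition beta (m : int) : rat := if m < 0 then 0 else tri m%:~R / 2.

Lemma beta_lt0 (m : int) : m < 0 -> beta m = 0.
Proof. by rewrite /beta => ->. Qed.

Lemma beta_tri (m : int) : -2 <= m -> beta m = tri m%:~R / 2.
Proof.
rewrite /beta; have [m_lt0 m_geN2|//] := ltrP m 0.
have [->|->] : m = -1 \/ m = -2 by lia.
all: by rewrite /tri; ring.
Qed.

Lemma beta_diff3 (m : int) : diff3 beta m = (m == 0)%:R.
Proof.
rewrite /diff3; case: (ltrgtP m 0) => [m_lt0|m_gt0|->].
- by rewrite !beta_lt0 ?(negbTE (ltr0_neq0 m_lt0)) ?mulr0 ?subrr //; lia.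
- rewrite !beta_tri ?(negbTE (gtr0_neq0 m_gt0)); try lia.
  by rewrite /tri /=; ring.
- by rewrite /beta /tri /=; field.
Qed.

(* The coefficient of [x^k] in [((1 - x^N) / (1 - x))^3]. *)
Definition geom3_coef (N : nat) (k : int) : rat :=
  beta k - 3 * beta (k - N%:Z) + 3 * beta (k - (2 * N)%:Z) - beta (k - (3 * N)%:Z).

Lemma geom3_coef_lt0 N (k : int) : k < 0 -> geom3_coef N k = 0.
Proof. by move=> k_lt0; rewrite /geom3_coef !beta_lt0 ?mulr0 ?subrr //; lia. Qed.

Lemma geom3_coef_ge N (k : int) : (3 * N)%:Z <= k -> geom3_coef N k = 0.
Proof. by move=> k_ge; rewrite /geom3_coef !beta_tri /tri /=; try lia; ring. Qed.

Lemma diff3_geom3_coef N (k : int) : diff3 (geom3_coef N) k =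
  (k == 0)%:R - 3 * (k == N%:Z)%:R + 3 * (k == (2 * N)%:Z)%:R - (k == (3 * N)%:Z)%:R.
Proof.
have shift (s : int) : diff3 (fun m => beta (m - s)) k = (k == s)%:R.
  by rewrite -subr_eq0 -beta_diff3 /diff3 !(addrAC _ (- s)).
have := shift N; have := shift (2 * N)%:Z; have := shift (3 * N)%:Z.
rewrite /diff3 /geom3_coef -beta_diff3 /diff3; lra.
Qed.

Definition geom3_poly (N : nat) : {poly rat} := \poly_(k < 3 * N) geom3_coef N k.

Lemma coef_geom3_poly N (k : nat) : (geom3_poly N)`_k = geom3_coef N k.
Proof.
by rewrite coef_poly; case: ltnP => // k_ge; rewrite geom3_coef_ge //; lia.
Qed.

Lemma geom3_polyE N : (1 - 'X) ^+ 3 * geom3_poly N = (1 - 'X^N) ^+ 3.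
Proof.
apply/polyP => k; rewrite (coef_1subX3M (coef_geom3_poly N)) ?diff3_geom3_coef;
  last exact: geom3_coef_lt0.
have -> : (1 - 'X^N) ^+ 3
          = 1 - 'X^N *+ 3 + 'X^(2 * N) *+ 3 - 'X^(3 * N) :> {poly rat}.
  by rewrite ![(_ * N)%N]mulnC !exprM; ring.
by rewrite !coefD !coefN !coefMn coef1 !coefXn !eqz_nat; ring.
Qed.

Lemma prod_1addX_exp2 (R : comNzRingType) n :
  (1 - 'X) * \prod_(j < n) (1 + 'X^(2 ^ j)) = 1 - 'X^(2 ^ n) :> {poly R}.
Proof.
elim: n => [|n IH]; first by rewrite big_ord0 mulr1 expn0.
by rewrite big_ord_recr /= mulrA IH expnSr exprM; ring.
Qed.

Lemma Ppoly_geom3 n : map_poly intr (Ppoly n) = geom3_poly (2 ^ n).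
Proof.
have nz_1subX3 : (1 - 'X : {poly rat}) ^+ 3 != 0.
  by rewrite expf_neq0 // -opprB oppr_eq0 -polyC1 polyXsubC_eq0.
apply: (mulfI nz_1subX3); rewrite geom3_polyE /Ppoly rmorph_prod /=.
under eq_bigr do rewrite rmorphXn rmorphD rmorph1 rmorphXn /= map_polyX.
by rewrite prodrXl -exprMn prod_1addX_exp2.
Qed.

Lemma geom3_coef_blocks N j : (j < N)%N ->
  [/\ geom3_coef N j = tri (j%:R : rat) / 2,
      geom3_coef N (N + j)%N = (tri (N%:R + j%:R) - 3 * tri j%:R) / 2
    & geom3_coef N (N + (N + j))%N =
      (tri (N%:R + N%:R + j%:R) - 3 * tri (N%:R + j%:R) + 3 * tri j%:R) / 2].
Proof.
move=> lt_jN; rewrite /geom3_coef; split;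
  do ![rewrite beta_lt0; last lia | rewrite beta_tri; last lia];
  rewrite /tri; ring.
Qed.

Lemma sum_geom3_coef_pow r N : \sum_(k < 3 * N) geom3_coef N k ^+ r =
  \sum_(j < N) block_pow r (N%:R : rat) j%:R / 2 ^+ r.
Proof.
have -> : (3 * N = N + (N + N))%N by lia.
rewrite !big_split_ord /= -!big_split /=; apply: eq_bigr => j _.
have [-> -> ->] := geom3_coef_blocks (ltn_ord j).
by rewrite /block_pow addrA !expr_div_n -!mulrDl.
Qed.

(* The padding coefficients beyond [size (Ppoly n)] contribute [0 ^+ r]. *)
Lemma u_sum_geom3_coef r n : (0 < r)%N ->
  (u r n)%:~R = \sum_(k < 3 * 2 ^ n) geom3_coef (2 ^ n) k ^+ r.
Proof.
move=> r_gt0; have coefE k : (cc n k)%:~R = geom3_coef (2 ^ n) k.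
  by rewrite /cc -coef_map Ppoly_geom3 coef_geom3_poly.
have size_P : (size (Ppoly n) <= 3 * 2 ^ n)%N.
  by rewrite -(size_map_inj_poly (@intr_inj rat)) // Ppoly_geom3 size_poly.
rewrite /u rmorph_sum; under eq_bigr do rewrite rmorphXn /= coefE.
rewrite (big_ord_widen _ (fun k => geom3_coef (2 ^ n) k ^+ r) size_P) big_mkcond /=.
apply: eq_bigr => k _; case: ltnP => // size_le.
by rewrite -coefE /cc nth_default // expr0n gtn_eqF.
Qed.

Unset Implicit Arguments.

Theorem theorem5p1 (r : nat) (hr : (1 <= r)%N) :
  exists c : 'I_r.+1 -> rat,
    forall n : nat,
      (u r n)%:~R = \sum_(i < r.+1) c i * (2 ^+ ((2 * i + 1) * n)%N : rat).
Proof.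
pose Q := sum_below (block_poly rat r).
have Q_nat (N : nat) : Q.[N%:R] = \sum_(j < N) block_pow r (N%:R : rat) j%:R.
  by rewrite horner_sum_below_nat; under eq_bigr do rewrite horner2_block_poly.
have Q_odd (N : nat) : Q.[- N%:R] = - Q.[N%:R].
  rewrite horner_sum_below_Nnat Q_nat -sum_block_pow_reflect.
  by under eq_bigr do rewrite horner2_block_poly.
have size_oddQ : (size (odd_poly Q) <= r.+1)%N.
  rewrite (leq_trans (size_odd_poly _)) // -[r.+1]doubleK; apply: half_leq.
  by rewrite doubleS -mul2n; apply: size_sum_below (tdeg_block_poly _ _).
exists (fun i => (odd_poly Q)`_i / 2 ^+ r) => n.
rewrite u_sum_geom3_coef // sum_geom3_coef_pow -mulr_suml -Q_nat.
rewrite (horner_odd_on_nat Q_odd) (horner_coef_wide _ size_oddQ) !mulr_suml.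
apply: eq_bigr => i _; rewrite -[_ * _ ^+ i * _]mulrA natrX -!exprM -exprD.
by rewrite mulrAC; congr (_ * _ * 2 ^+ _); lia.
Qed.
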